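(* Let $I=(a..c)$ be a conserved interval of $\mathcal{P}$, and let $F$ and $F'$ be two sets of frontiers of $I$. Then $F\cup F'$ is also a set of frontiers of $I$.
   Context: Let $n\geq 2$ and let $\mathcal{P}=\{P_1,\ldots,P_K\}$ be signed permutations of $\{1,\ldots,n\}$: each $P_k$ is an ordering of $1,\ldots,n$ in which each element carries a sign $+$ or $-$. Assume $P_1=(+1,+2,\ldots,+n)$ and that every $P_k$ has first element $+1$ and last element $+n$. For integers $i\leq j$ write $(i..j)=\{i,\ldots,j\}$. A conserved interval of $\mathcal{P}$ is either a singleton, or a set $(a..c)$ with $a<c$ which (ignoring signs) occupies consecutive positions in every $P_k$ and which, in every $P_k$, has either $+a$ at its left end and $+c$ at its right end, or $-c$ at its left end and $-a$ at its right end. For a conserved interval $I=(a..c)$, a set $\{f_1,\ldots,f_k\}$ with $a=f_1<f_2<\cdots<f_k=c$ is a set of frontiers of $I$ if $(f_i..f_j)$ is a conserved interval for all $1\leq i<j\leq k$. *)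

From mathcomp Require Import all_boot.
Set Implicit Arguments. Unset Strict Implicit. Unset Printing Implicit Defensive.

(* A signed element: (true, x) is +x, (false, x) is -x. *)
Definition selt := (bool * nat)%type.

Definition signed_perm (n : nat) (p : seq selt) : Prop :=
  perm_eq (map snd p) (iota 1 n).

Definition id_sperm (n : nat) : seq selt := map (fun x => (true, x)) (iota 1 n).

Definition valid_family (n : nat) (Ps : seq (seq selt)) : Prop :=
  [/\ 2 <= n,
      ohead Ps = Some (id_sperm n),
      (forall p, p \in Ps -> signed_perm n p) &
      (forall p, p \in Ps -> ohead p = Some (true, 1) /\ last (true, 0) p = (true, n))].

(* (a..c), a < c, occupies consecutive positions in p (ignoring signs), with
   either +a at its left end and +c at its right end, or -c at the left end
   and -a at the right end. *)
Definition conserved_in (p : seq selt) (a c : nat) : Prop :=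
  exists i, let b := take (c - a).+1 (drop i p) in
    size b = (c - a).+1 /\ perm_eq (map snd b) (iota a (c - a).+1) /\
    ((head (true, 0) b = (true, a) /\ last (true, 0) b = (true, c)) \/
     (head (true, 0) b = (false, c) /\ last (true, 0) b = (false, a))).

Definition conserved (n : nat) (Ps : seq (seq selt)) (a c : nat) : Prop :=
  (a = c /\ 1 <= a <= n) \/
  (a < c /\ forall p, p \in Ps -> conserved_in p a c).

Definition frontiers (n : nat) (Ps : seq (seq selt)) (a c : nat) (F : seq nat) : Prop :=
  [/\ a \in F, c \in F,
      (forall f, f \in F -> a <= f <= c) &
      (forall f g, f \in F -> g \in F -> f < g -> conserved n Ps f g)].

(* Two crossing conserved intervals (f'..g) and (f..g'), f' <= f < g <= g',
   occupy two windows of consecutive positions in each P_k; their overlap is a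
   window holding exactly (f..g).  Its ends are ends of the two original
   windows, so each carries one of +f', -g, +f, -g' (left) or +g, -f', +g', -f
   (right); since both lie in (f..g) and differ, they are +f ... +g or
   -g ... -f.  Hence a frontier of F and a larger frontier of F' bound a
   conserved interval, obtained as the overlap of (a..g) and (f..c). *)

From mathcomp Require Import all_boot.
From mathcomp Require Import zify.
Set Implicit Arguments. Unset Strict Implicit.

Lemma mem_take_drop (T : eqType) (s : seq T) i k z : uniq s ->
  (z \in take k (drop i s)) = (z \in s) && (i <= index z s < i + k).
Proof.
move=> us; apply/idP/idP.
- move=> zs; rewrite (mem_drop (mem_take zs)) /=.
  case/(nthP z): zs => j; rewrite size_take_min size_drop => lt_j.
  rewrite nth_take; last by lia.
  rewrite nth_drop => <-.
  by rewrite index_uniq //; lia.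
- case/andP=> zs lt_z; apply/(nthP z); exists (index z s - i).
    by rewrite size_take_min size_drop; have := index_mem z s; rewrite zs; lia.
  by rewrite nth_take ?nth_drop ?subnKC ?nth_index //; lia.
Qed.

Lemma window_length (s : seq nat) i j x y : uniq s -> x <= y -> j <= size s ->
  (forall z, (z \in s) && (i <= index z s < j) = (x <= z <= y)) ->
  j = i + (y - x).+1.
Proof.
move=> us le_xy le_js win.
have lt_ij : i < j by move: (win x); case: (x \in s) => /=; lia.
have perm_win : perm_eq (take (j - i) (drop i s)) (iota x (y - x).+1).
  apply: uniq_perm; rewrite ?take_uniq ?drop_uniq ?iota_uniq // => z.
  rewrite mem_take_drop // mem_iota subnKC; last by lia.
  by rewrite win; apply/idP/idP; lia.
move: (perm_size perm_win) le_js lt_ij.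
by rewrite size_take_min size_drop size_iota; move: (size s) => N; lia.
Qed.

Definition selt0 : selt := (true, 0).

Definition end_signs (h r : selt) (x y : nat) : Prop :=
  (h = (true, x) /\ r = (true, y)) \/ (h = (false, y) /\ r = (false, x)).

Lemma end_signs_mem h r x y : end_signs h r x y ->
  h \in [:: (true, x); (false, y)] /\ r \in [:: (true, y); (false, x)].
Proof. by case=> [[-> ->]|[-> ->]]; rewrite !inE !eqxx ?orbT. Qed.

Lemma end_signs_meet (h r : selt) f' f g g' : f' <= f -> f < g -> g <= g' ->
  h \in [:: (true, f'); (false, g)] ++ [:: (true, f); (false, g')] ->
  r \in [:: (true, g); (false, f')] ++ [:: (true, g'); (false, f)] ->
  f <= h.2 <= g -> f <= r.2 <= g -> h.2 != r.2 -> end_signs h r f g.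
Proof.
move=> ? ? ?; rewrite !(mem_cat, inE) -!orbA => /or4P[] /eqP-> /or4P[] /eqP-> /= ? ? /eqP ?;
  first [left; split; congr pair; lia | right; split; congr pair; lia | lia].
Qed.

Definition block_at (p : seq selt) (i x y : nat) : Prop :=
  [/\ i + (y - x).+1 <= size p,
      forall z, (z \in map snd p) && (i <= index z (map snd p) < i + (y - x).+1)
                = (x <= z <= y)
    & end_signs (nth selt0 p i) (nth selt0 p (i + (y - x))) x y].

Lemma conserved_inP (p : seq selt) x y : uniq (map snd p) -> x <= y ->
  conserved_in p x y <-> exists i, block_at p i x y.
Proof.
move=> us le_xy.
have ends i : i + (y - x).+1 <= size p ->
    size (take (y - x).+1 (drop i p)) = (y - x).+1 /\
    head selt0 (take (y - x).+1 (drop i p)) = nth selt0 p i /\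
    last selt0 (take (y - x).+1 (drop i p)) = nth selt0 p (i + (y - x)).
  move=> le_size; have sz : size (take (y - x).+1 (drop i p)) = (y - x).+1.
    by rewrite size_takel // size_drop; lia.
  by rewrite -nth0 -nth_last sz !nth_take ?nth_drop ?addn0.
split=> [[i [sz [perm_b end_b]]] | [i [le_size win end_b]]]; exists i.
- have le_size : i + (y - x).+1 <= size p.
    by move: sz; rewrite size_take_min size_drop; lia.
  have [_ [hd lt]] := ends i le_size; rewrite /selt0 in hd lt.
  rewrite hd lt in end_b; split=> // z; rewrite -mem_take_drop // -map_drop -map_take.
  by rewrite (perm_mem perm_b) mem_iota; apply/idP/idP; lia.
- have [sz [hd lt]] := ends i le_size.
  rewrite /selt0 in hd lt; cbv zeta; rewrite sz hd lt; split=> //; split=> //.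
  apply: uniq_perm; rewrite ?map_take ?map_drop ?take_uniq ?drop_uniq ?iota_uniq //.
  by move=> z; rewrite mem_take_drop // win mem_iota; apply/idP/idP; lia.
Qed.

Lemma conserved_in_meet (p : seq selt) f' f g g' : uniq (map snd p) ->
  f' <= f -> f < g -> g <= g' ->
  conserved_in p f' g -> conserved_in p f g' -> conserved_in p f g.
Proof.
move=> us le_f' lt_fg le_g'.
move=> /(conserved_inP us (leq_trans le_f' (ltnW lt_fg))) [i1 [size1 win1 end1]].
move=> /(conserved_inP us (leq_trans (ltnW lt_fg) le_g')) [i2 [size2 win2 end2]].
apply/(conserved_inP us (ltnW lt_fg)); set s := map snd p in us win1 win2 *.
have size_s : size s = size p by rewrite size_map.
set i := maxn i1 i2; set j := minn (i1 + (g - f').+1) (i2 + (g' - f).+1).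
have win z : (z \in s) && (i <= index z s < j) = (f <= z <= g).
  by move: (win1 z) (win2 z); rewrite /i /j; case: (z \in s) => /=; lia.
have def_j : j = i + (g - f).+1.
  by apply: window_length win => //; [lia | rewrite size_s /j; lia].
have i_end : i = i1 \/ i = i2 by rewrite /i /maxn; case: ltnP; auto.
have j_end : j = i1 + (g - f').+1 \/ j = i2 + (g' - f).+1.
  by rewrite /j /minn; case: ltnP; auto.
have [le_j1 le_j2] : j <= i1 + (g - f').+1 /\ j <= i2 + (g' - f).+1.
  by rewrite /j geq_minl geq_minr.
have [le_i1 le_i2] : i1 <= i /\ i2 <= i by rewrite /i leq_maxl leq_maxr.
clearbody i j; subst j; exists i; split=> //; first lia.
have val_in k : i <= k < i + (g - f).+1 -> f <= (nth selt0 p k).2 <= g.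
  move=> lt_k; rewrite -(nth_map selt0 0) -/s -?win ?mem_nth ?index_uniq //=; lia.
have [hd1 lt1] := end_signs_mem end1; have [hd2 lt2] := end_signs_mem end2.
apply: (end_signs_meet le_f' lt_fg le_g'); rewrite ?val_in //; try lia.
- by case: i_end => ->; rewrite mem_cat ?hd1 ?hd2 ?orbT.
- case: j_end => [e | e].
  + by rewrite (_ : i + (g - f) = i1 + (g - f')) ?mem_cat ?lt1 //; lia.
  + by rewrite (_ : i + (g - f) = i2 + (g' - f)) ?mem_cat ?lt2 ?orbT //; lia.
- rewrite -!(nth_map selt0 0) -/s ?nth_uniq ?size_s; lia.
Qed.

Lemma frontiers_cross n Ps a c F1 F2 f g :
  (forall p, p \in Ps -> signed_perm n p) ->
  frontiers n Ps a c F1 -> frontiers n Ps a c F2 ->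
  f \in F1 -> g \in F2 -> f < g -> conserved n Ps f g.
Proof.
move=> perms [aF1 cF1 bF1 cons1] [aF2 cF2 bF2 cons2] fF1 gF2 lt_fg.
have /andP[le_af _] := bF1 f fF1; have /andP[_ le_gc] := bF2 g gF2.
right; split=> // p pPs.
have us : uniq (map snd p) by rewrite (perm_uniq (perms p pPs)) iota_uniq.
have [[? _]|[_ cons_ag]] := cons2 a g aF2 gF2 (leq_ltn_trans le_af lt_fg); first lia.
have [[? _]|[_ cons_fc]] := cons1 f c fF1 cF1 (leq_trans lt_fg le_gc); first lia.
exact: (conserved_in_meet us le_af lt_fg le_gc (cons_ag p pPs) (cons_fc p pPs)).
Qed.

Theorem lemma7 (n : nat) (Ps : seq (seq selt)) (a c : nat) (F F' : seq nat) :
  valid_family n Ps ->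
  conserved n Ps a c ->
  frontiers n Ps a c F ->
  frontiers n Ps a c F' ->
  frontiers n Ps a c (F ++ F').
Proof.
move=> [_ _ perms _] _ FF FF'.
have [aF cF bF consF] := FF; have [aF' cF' bF' consF'] := FF'.
split; rewrite ?mem_cat ?aF ?cF //.
- by move=> f; rewrite mem_cat => /orP[]; [apply: bF | apply: bF'].
- move=> f g; rewrite !mem_cat => /orP[] fF /orP[] gF.
  + exact: consF.
  + exact: frontiers_cross perms FF FF' fF gF.
  + exact: frontiers_cross perms FF' FF fF gF.
  + exact: consF'.
Qed.
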